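(* Let $(V,\omega,H)$ be a linear Hamiltonian system (a finite-dimensional real symplectic vector space $(V,\omega)$ with a quadratic form $H$) which decomposes as a direct sum $(V_1,\omega_1,H_1)\oplus(V_2,\omega_2,H_2)$, i.e. $V=V_1\oplus V_2$ with $\omega=\omega_1\oplus\omega_2$ and $H(v_1+v_2)=H_1(v_1)+H_2(v_2)$. Let $\mathcal{N}=H^{-1}(0)$ and $\mathcal{N}_j=H_j^{-1}(0)\subset V_j$. Suppose the linear Hamiltonian vector fields associated with $H_1$ and $H_2$ have no eigenvalues in common. Then every Lagrangian subspace $L\subset V$ with $L\subset\mathcal{N}$ can be written as a direct sum $L=L_1\oplus L_2$, where each $L_j$ is a Lagrangian subspace of $(V_j,\omega_j)$ contained in $\mathcal{N}_j$.
   Context: For a linear Hamiltonian system $(V,\omega,H)$, the associated linear vector field is $X_H$ defined by $\omega(X_H(v),\cdot)=\mathrm{d}H(v)$; its eigenvalues are the eigenvalues of the system. A Lagrangian subspace of a symplectic vector space is a subspace of half the dimension on which the symplectic form vanishes. *)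

From HB Require Import structures.
From mathcomp Require Import all_boot all_order all_algebra.
From mathcomp Require Import complex.
From mathcomp Require Import reals.

Set Implicit Arguments.
Unset Strict Implicit.
Unset Printing Implicit Defensive.

Import Order.TTheory GRing.Theory Num.Theory.
Local Open Scope ring_scope.

(* Vectors of V = R^n are row vectors 'rV[R]_n.
   A bilinear form is given by its Gram matrix W : omega(u, w) = u W w^T.   *)
Definition bform {R : realType} {n : nat} (W : 'M[R]_n) (u w : 'rV[R]_n) : R :=
  (u *m W *m w^T) 0 0.

Definition symplectic_form {R : realType} {n : nat} (W : 'M[R]_n) : Prop :=
  W^T = - W /\ W \in unitmx.

Definition qform {R : realType} {n : nat} (S : 'M[R]_n) (v : 'rV[R]_n) : R :=
  (v *m S *m v^T) 0 0.

(* Its differential: dH(v)(w) = 2 v S w^T  (S symmetric). *)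
Definition dqform {R : realType} {n : nat} (S : 'M[R]_n) (v w : 'rV[R]_n) : R :=
  2 * (v *m S *m w^T) 0 0.

(* The Hamiltonian vector field X_H, v |-> v *m ham_mx W S, defined by
   omega(X_H(v), w) = dH(v)(w) for all w (see ham_mx_spec below). *)
Definition ham_mx {R : realType} {n : nat} (W S : 'M[R]_n) : 'M[R]_n :=
  2%:R *: (S *m invmx W).

Lemma ham_mx_spec {R : realType} {n : nat} (W S : 'M[R]_n) :
  W \in unitmx ->
  forall v w : 'rV[R]_n, bform W (v *m ham_mx W S) w = dqform S v w.
Proof.
move=> Wu v w; rewrite /bform /dqform /ham_mx.
rewrite -scalemxAr -!scalemxAl mxE !mulmxA -(mulmxA _ (invmx W)).
by rewrite mulVmx // mulmx1.
Qed.

(* Eigenvalues of a real linear map are its complex eigenvalues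
   (eigenvalues of the complexification). *)
Definition ham_eigenvalue {R : realType} {n : nat} (W S : 'M[R]_n) (z : R[i]) : bool :=
  eigenvalue (map_mx (real_complex R) (ham_mx W S)) z.

(* A subspace of R^n is the row space of a matrix L : 'M_n.
   L is Lagrangian for W: dim L = n/2 and omega vanishes on L. *)
Definition lagrangian {R : realType} {n : nat} (W : 'M[R]_n) (L : 'M[R]_n) : Prop :=
  (\rank L * 2 = n)%N /\ (forall u w : 'rV[R]_n, (u <= L)%MS -> (w <= L)%MS -> bform W u w = 0).

Definition in_null {R : realType} {n : nat} (S : 'M[R]_n) (L : 'M[R]_n) : Prop :=
  forall v : 'rV[R]_n, (v <= L)%MS -> qform S v = 0.

From HB Require Import structures.
From mathcomp Require Import all_boot all_order all_algebra.
From mathcomp Require Import complex.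
From mathcomp Require Import reals.
From mathcomp Require Import zify.
Import GRing.Theory Num.Theory.
Local Open Scope ring_scope.

(* A Lagrangian L inside H^-1(0) is invariant under X_H: for u, w in L,
   omega(u X_H, w) = dH(u)(w) = 0 by polarization, and a Lagrangian subspace
   is its own omega-orthogonal.  As X_H = diag(X_1, X_2) with coprime
   characteristic polynomials, the projection diag(1, 0) is a polynomial in
   X_H, so L also splits as L_1 (+) L_2.  Each L_j is isotropic and lies in
   H_j^-1(0), so dim L_j <= dim V_j / 2; the dimensions add up to dim V / 2,
   hence both are Lagrangian. *)

Section IsotropicSubspaces.
Context {F : fieldType} {n : nat}.
Implicit Types (X W : 'M[F]_n).

Lemma form_eq0_sub {k p q X} {L : 'M_(k, n)} {M : 'M_(p, n)} {N : 'M_(q, n)} :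
  (M <= L)%MS -> (N <= L)%MS -> L *m X *m L^T = 0 -> M *m X *m N^T = 0.
Proof.
move=> /submxP[D ->] /submxP[E ->] LXL.
by rewrite trmx_mul !mulmxA -2!(mulmxA D) LXL mulmx0 mul0mx.
Qed.

Lemma mxrank_ker_form W k (M : 'M_(k, n)) :
  W \in unitmx -> \rank (kermx (W *m M^T)) = (n - \rank M)%N.
Proof.
move=> Wu; rewrite mxrank_ker -mxrank_tr trmx_mul trmxK.
by rewrite mxrankMfree // row_free_unit unitmx_tr.
Qed.

Lemma isotropic_rank {W k} {M : 'M_(k, n)} :
  W \in unitmx -> M *m W *m M^T = 0 -> (\rank M * 2 <= n)%N.
Proof.
move=> Wu MWM; have: (M <= kermx (W *m M^T))%MS by rewrite sub_kermx mulmxA MWM.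
move/mxrankS; rewrite mxrank_ker_form //.
by have := rank_leq_col M; lia.
Qed.

Lemma lagrangian_orth_sub {W m k} {L : 'M_(m, n)} {X : 'M_(k, n)} :
  W \in unitmx -> (\rank L * 2 = n)%N -> L *m W *m L^T = 0 ->
  X *m W *m L^T = 0 -> (X <= L)%MS.
Proof.
move=> Wu rkL LWL XWL.
have L_ker : (L <= kermx (W *m L^T))%MS by rewrite sub_kermx mulmxA LWL.
have ker_L : (kermx (W *m L^T) <= L)%MS.
  by rewrite -(mxrank_leqif_sup L_ker).2 mxrank_ker_form //; lia.
by apply: submx_trans ker_L; rewrite sub_kermx mulmxA XWL.
Qed.

End IsotropicSubspaces.

Section RealForms.
Context {R : realType} {n : nat}.
Implicit Types (X S W : 'M[R]_n).

Lemma form_entry k (M : 'M[R]_(k, n)) X i j :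
  (M *m X *m M^T) i j = bform X (row i M) (row j M).
Proof.
rewrite /bform !mxE; apply: eq_bigr => l _; rewrite !mxE; congr (_ * _).
by apply: eq_bigr => m _; rewrite !mxE.
Qed.

Lemma bform_eq0P k X (M : 'M_(k, n)) :
  (forall u w, (u <= M)%MS -> (w <= M)%MS -> bform X u w = 0) <->
  M *m X *m M^T = 0.
Proof.
split=> [vanish | MXM u w uM wM].
  by apply/matrixP => i j; rewrite form_entry vanish ?row_sub // mxE.
by rewrite /bform (form_eq0_sub uM wM MXM) mxE.
Qed.

Lemma lagrangianE W (L : 'M[R]_n) :
  lagrangian W L <-> (\rank L * 2 = n)%N /\ L *m W *m L^T = 0.
Proof. by split=> -[rkL LWL]; split=> //; apply/bform_eq0P. Qed.

Lemma in_nullE {S} {L : 'M[R]_n} : S^T = S -> in_null S L <-> L *m S *m L^T = 0.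
Proof.
move=> S_sym; split=> [null | /bform_eq0P vanish v vL]; last exact: vanish.
apply/bform_eq0P => u w uL wL.
have bform_sym : bform S w u = bform S u w.
  have tr_form : (w *m S *m u^T)^T = u *m S *m w^T.
    by rewrite !trmx_mul trmxK S_sym mulmxA.
  by rewrite /bform -tr_form [RHS]mxE.
have qu : bform S u u = 0 := null u uL.
have qw : bform S w w = 0 := null w wL.
have := null _ (addmx_sub uL wL).
rewrite /qform raddfD /= !mulmxDl !mulmxDr ![(_ + _ : 'M_1) 0 0]mxE.
rewrite -!/(bform S _ _) qu qw bform_sym add0r addr0 -mulr2n -mulr_natl.
by move/eqP; rewrite mulf_eq0 pnatr_eq0 => /eqP.
Qed.

End RealForms.

Section HamiltonianVectorField.
Context {R : realType}.

Lemma ham_mx_mulW n (W S : 'M[R]_n) :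
  W \in unitmx -> ham_mx W S *m W = 2%:R *: S.
Proof. by move=> Wu; rewrite /ham_mx -scalemxAl -mulmxA mulVmx // mulmx1. Qed.

Lemma lagrangian_stable_ham_mx n (W S L : 'M[R]_n) :
  W \in unitmx -> lagrangian W L -> L *m S *m L^T = 0 ->
  stablemx L (ham_mx W S).
Proof.
move=> Wu /lagrangianE[rkL LWL] LSL; apply: (lagrangian_orth_sub Wu rkL LWL).
by rewrite -(mulmxA L) ham_mx_mulW // -scalemxAr -scalemxAl LSL scaler0.
Qed.

Lemma ham_mx_block_diag n1 n2 (W1 S1 : 'M[R]_n1) (W2 S2 : 'M[R]_n2) :
  W1 \in unitmx -> W2 \in unitmx ->
  ham_mx (block_mx W1 0 0 W2) (block_mx S1 0 0 S2) =
  block_mx (ham_mx W1 S1) 0 0 (ham_mx W2 S2).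
Proof.
move=> W1u W2u; rewrite /ham_mx invmx_block_diag ?block_diag_mx_unit ?W1u //.
by rewrite mulmx_block !mulmx0 !mul0mx !addr0 !add0r scale_block_mx !scaler0.
Qed.

End HamiltonianVectorField.

Lemma coprimep_char_poly {R : rcfType} {n1 n2} (A1 : 'M[R]_n1) (A2 : 'M[R]_n2) :
  (forall z : R[i], ~ (eigenvalue (map_mx (real_complex R) A1) z /\
                       eigenvalue (map_mx (real_complex R) A2) z)) ->
  coprimep (char_poly A1) (char_poly A2).
Proof.
move=> no_common; rewrite -(coprimep_map (real_complex R)) !map_char_poly.
apply/negPn/negP => /closed_rootP[z].
rewrite root_gcd -!eigenvalue_root_char => /andP[z1 z2].
by apply: (no_common z).
Qed.

Lemma horner_mx_block_diag (R : comNzRingType) k1 k2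
    (A1 : 'M[R]_k1.+1) (A2 : 'M[R]_k2.+1) (p : {poly R}) :
  horner_mx (block_mx A1 0 0 A2 : 'M_(k1.+1 + k2.+1)) p =
  block_mx (horner_mx A1 p) 0 0 (horner_mx A2 p).
Proof.
elim/poly_ind: p => [|p c IHp]; first by rewrite !rmorph0 block_mx0.
rewrite !rmorphD !rmorphM /= !horner_mx_X !horner_mx_C IHp -!mulmxE.
apply: etrans (congr2 +%R (mulmx_block _ _ _ _ A1 0 0 A2)
                        (scalar_mx_block k1.+1 k2.+1 c)) _.
by rewrite !mulmx0 !mul0mx !addr0 !add0r add_block_mx !addr0.
Qed.

Section BlockDiagonal.
Context {F : fieldType}.

(* Bezout: if [u p1 + v p2 = 1] for the characteristic polynomials [p1], [p2],
   Cayley-Hamilton makes [(v p2)(diag(A1, A2))] the projection [diag(1, 0)]. *)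
Lemma stablemx_diag_proj {n1 n2} {A1 : 'M[F]_n1} {A2 : 'M[F]_n2}
    {L : 'M_(n1 + n2)} :
  coprimep (char_poly A1) (char_poly A2) ->
  stablemx L (block_mx A1 0 0 A2) -> stablemx L (block_mx 1%:M 0 0 0).
Proof.
case: n1 => [|k1] in A1 L *.
  by rewrite [1%:M]flatmx0 block_mx0 stablemx0.
case: n2 => [|k2] in A2 L *.
  by rewrite -[0 : 'M_0](flatmx0 1%:M) -scalar_mx_block stablemxC.
move=> /Bezout_eq1_coprimepP[[u v] /= uv1].
move/(horner_mx_stable (v * char_poly A2)).
rewrite horner_mx_block_diag [horner_mx A2 _]rmorphM /= Cayley_Hamilton mulr0.
have -> : v * char_poly A2 = 1 - u * char_poly A1.
  by rewrite -uv1 [u * _ + _]addrC addrK.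
by rewrite rmorphB rmorph1 rmorphM /= Cayley_Hamilton mulr0 subr0.
Qed.

Lemma submx_diag_block_mx m1 m2 p1 p2 n1 n2 (A : 'M[F]_(m1, n1))
    (A' : 'M_(p1, n1)) (B : 'M_(m2, n2)) (B' : 'M_(p2, n2)) :
  (A <= A')%MS -> (B <= B')%MS -> (block_mx A 0 0 B <= block_mx A' 0 0 B')%MS.
Proof.
move=> /submxP[D ->] /submxP[E ->]; apply/submxP; exists (block_mx D 0 0 E).
by rewrite mulmx_block !mulmx0 !mul0mx !addr0 !add0r.
Qed.

Lemma stablemx_diag_proj_eqmx n1 n2 m (L : 'M[F]_(m, n1 + n2)) :
  stablemx L (block_mx 1%:M 0 0 0) ->
  (L == block_mx <<lsubmx L>> 0 0 <<rsubmx L>>)%MS.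
Proof.
set P := block_mx _ _ _ _ => L_stable.
have LP : L *m P = row_mx (lsubmx L) 0.
  by rewrite -{1}(hsubmxK L) mul_row_block !mulmx0 !mulmx1 !addr0.
have L_LP : L - L *m P = row_mx 0 (rsubmx L).
  by rewrite LP -{1}(hsubmxK L) opp_row_mx add_row_mx subrr oppr0 addr0.
have L_split : (L :=: block_mx (lsubmx L) 0 0 (rsubmx L))%MS.
  rewrite block_mxEv -LP -L_LP; apply/eqmxP/andP; split.
    by rewrite -addsmxE -{1}(subrK (L *m P) L) addsmxC addmx_sub_adds.
  by rewrite col_mx_sub L_stable addmx_sub // eqmx_opp.
apply/eqmxP; apply: eqmx_trans L_split _.
by apply/eqmxP/andP; split; apply: submx_diag_block_mx; rewrite genmxE.
Qed.

Lemma mulmx_diag_block_form k1 k2 n1 n2 (M1 : 'M[F]_(k1, n1))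
    (M2 : 'M_(k2, n2)) (X1 : 'M_n1) (X2 : 'M_n2) :
  block_mx M1 0 0 M2 *m block_mx X1 0 0 X2 *m (block_mx M1 0 0 M2)^T =
  block_mx (M1 *m X1 *m M1^T) 0 0 (M2 *m X2 *m M2^T).
Proof.
by rewrite tr_block_mx !trmx0 !mulmx_block !(mulmx0, mul0mx, addr0, add0r).
Qed.

Lemma form_eq0_diag_block {k k1 k2 n1 n2} {L : 'M[F]_(k, n1 + n2)}
    {M1 : 'M_(k1, n1)} {M2 : 'M_(k2, n2)} {X1 : 'M_n1} {X2 : 'M_n2} :
  (L == block_mx M1 0 0 M2)%MS -> L *m block_mx X1 0 0 X2 *m L^T = 0 ->
  M1 *m X1 *m M1^T = 0 /\ M2 *m X2 *m M2^T = 0.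
Proof.
move=> /andP[_ ML] LXL; have := form_eq0_sub ML ML LXL.
rewrite mulmx_diag_block_form -[RHS]block_mx0.
by case/eq_block_mx => -> _ _ ->.
Qed.

End BlockDiagonal.

Theorem lemma2 (R : realType) (n1 n2 : nat)
  (W1 S1 : 'M[R]_n1) (W2 S2 : 'M[R]_n2) :
  symplectic_form W1 -> symplectic_form W2 ->
  S1^T = S1 -> S2^T = S2 ->
  (forall z : R[i], ~ (ham_eigenvalue W1 S1 z /\ ham_eigenvalue W2 S2 z)) ->
  forall L : 'M[R]_(n1 + n2),
    lagrangian (block_mx W1 0 0 W2) L ->
    in_null (block_mx S1 0 0 S2) L ->
    exists (L1 : 'M[R]_n1) (L2 : 'M[R]_n2),
      [/\ lagrangian W1 L1, in_null S1 L1,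
          lagrangian W2 L2, in_null S2 L2 &
          (L == col_mx (row_mx L1 0) (row_mx 0 L2))%MS].
Proof.
move=> [_ W1u] [_ W2u] S1_sym S2_sym no_common_eigenvalue L L_lag L_null.
have Wu : block_mx W1 0 0 W2 \in unitmx by rewrite block_diag_mx_unit W1u.
have S_sym : (block_mx S1 0 0 S2)^T = block_mx S1 0 0 S2.
  by rewrite tr_block_mx S1_sym S2_sym !trmx0.
have LSL := (in_nullE S_sym).1 L_null.
have L_stable : stablemx L (block_mx (ham_mx W1 S1) 0 0 (ham_mx W2 S2)).
  by rewrite -ham_mx_block_diag //; apply: lagrangian_stable_ham_mx.
have coprime_char := coprimep_char_poly _ _ no_common_eigenvalue.
(* [F := R] keeps the realType field instance, so that [lia] below sees the
   same [\rank] terms in every hypothesis. *)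
move: L_stable => /(stablemx_diag_proj (F := R) coprime_char).
move/stablemx_diag_proj_eqmx.
set L1 := <<_>>%MS; set L2 := <<_>>%MS => L_split.
have /lagrangianE[rkL LWL] := L_lag.
have [L1W L2W] := form_eq0_diag_block L_split LWL.
have [L1S L2S] := form_eq0_diag_block L_split LSL.
have rk_split : \rank L = (\rank L1 + \rank L2)%N.
  by rewrite (eqmxP L_split) rank_diag_block_mx.
have rkL1 := isotropic_rank W1u L1W.
have rkL2 := isotropic_rank W2u L2W.
exists L1, L2; split=> //.
- by apply/lagrangianE; split=> //; lia.
- exact/(in_nullE S1_sym).
- by apply/lagrangianE; split=> //; lia.
- exact/(in_nullE S2_sym).
Qed.
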